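(* Let $p>1$, $c\in(0,1]$, $X\subset\mathbb{R}^n$ nonempty convex compact, $F(\cdot,\xi)$ continuous and convex for each $\xi$, $f(x)=\mathbb{E}[F(x,\xi)]$, $h(x)=f(x)+c\,\mathbb{E}^{1/p}[(F(x,\xi)-f(x))_+^p]$, and let $x^*$ minimize $h$ over $X$. Define $\phi(x,y,z)=\frac c{z^{p-1}}\mathbb{E}[(F(x,\xi)-y)_+^p]+y+c(p-1)p^{-\frac p{p-1}}z$, $L(x,y,z,\lambda)=\phi(x,y,z)+\lambda(f(x)-y)$, $\Lambda=[0,1]$. Fix $\epsilon>0$ and let $(x_\epsilon^*,y_\epsilon^*,z_\epsilon^*,\lambda_\epsilon^* )$ be an optimal saddle point of $\min_{x\in X,y\in\mathbb{R},z\ge\epsilon}\max_{\lambda\in\Lambda}L(x,y,z,\lambda)$. Then $h(x_\epsilon^* )-h(x^* )\le cp^{-\frac1{p-1}}\epsilon$. Moreover, for any $\bar x\in X$, $\bar y\in\mathbb{R}$, $\bar z\ge\epsilon$ with $f(\bar x)-\bar y\le0$, \[ h(\bar x)-h(x^* )<[\phi(\bar x,\bar y,\bar z)-\phi(x_\epsilon^*,y_\epsilon^*,z_\epsilon^* )]+cp^{-\frac1{p-1}}\epsilon. \] In addition, for any $\bar x\in X$, $\bar y\in\mathbb{R}$, $\bar z\ge\epsilon$, $\bar\lambda\in\Lambda$, \[ h(\bar x)-h(x^* )<\Big[\max_{\lambda\in\Lambda}L(\bar x,\bar y,\bar z,\lambda)-\min_{x\in X,y\in\mathbb{R},z\ge\epsilon}L(x,y,z,\bar\lambda)\Big]+cp^{-\frac1{p-1}}\epsilon.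 \]
   Context: $(a)_+=\max\{a,0\}$; $F(x,\xi)$ has finite $p$-th moment for each $x\in X$. *)

From HB Require Import structures.
From mathcomp Require Import all_boot all_order all_algebra.
From mathcomp Require Import all_classical all_reals all_analysis.
Set Implicit Arguments. Unset Strict Implicit. Unset Printing Implicit Defensive.
Import Order.TTheory GRing.Theory Num.Theory.
Import numFieldNormedType.Exports.
Local Open Scope classical_set_scope.
Local Open Scope ring_scope.

(* Expectation of a real random variable g (real-valued; meaningful when g is
   integrable, which is ensured by the hypotheses of the theorem). *)
Definition Ex (R : realType) (d : measure_display) (T : measurableType d)
  (P : probability T R) (g : T -> R) : R :=
  fine (\int[P]_w (g w)%:E).

Definition pospart (R : realType) (a : R) : R := Num.max a 0.

Section Defs.
Context (R : realType) (d : measure_display) (T : measurableType d)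
  (P : probability T R) (d' : measure_display) (Xi : measurableType d')
  (xi : T -> Xi) (n : nat) (F : 'rV[R]_n -> Xi -> R) (p c : R).

Definition fobj (x : 'rV[R]_n) : R := Ex P (fun w => F x (xi w)).

Definition hobj (x : 'rV[R]_n) : R :=
  fobj x + c * (Ex P (fun w => pospart (F x (xi w) - fobj x) `^ p)) `^ (p^-1).

Definition phi (x : 'rV[R]_n) (y z : R) : R :=
  c / (z `^ (p - 1)) * Ex P (fun w => pospart (F x (xi w) - y) `^ p)
  + y + c * (p - 1) * p `^ (- (p / (p - 1))) * z.

Definition Lag (x : 'rV[R]_n) (y z lam : R) : R :=
  phi x y z + lam * (fobj x - y).

End Defs.

Definition Lam (R : realType) : set R := `[0, 1]%classic.

Definition convex_setR (R : realType) n (X : set 'rV[R]_n) : Prop :=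
  forall x y t, X x -> X y -> 0 <= t <= 1 -> X (t *: x + (1 - t) *: y).

Definition convex_funR (R : realType) n (g : 'rV[R]_n -> R) : Prop :=
  forall x y t, 0 <= t <= 1 -> g (t *: x + (1 - t) *: y) <= t * g x + (1 - t) * g y.

From HB Require Import structures.
From mathcomp Require Import all_boot all_order all_algebra.
From mathcomp Require Import all_classical all_reals all_analysis.
From mathcomp Require Import ring lra measurable_realfun hoelder.
Import Order.TTheory GRing.Theory Num.Theory.
Import numFieldNormedType.Exports.
Local Open Scope classical_set_scope.
Local Open Scope ring_scope.

(* For G >= 0, Young's inequality gives
     G^(1/p) = min_{z > 0} (G / z^(p-1) + kappa z),
   the minimum being attained at z = G^(1/p) p^(1/(p-1)). Combined with the
   Minkowski bound E^(1/p)[(F - f)_+^p] <= E^(1/p)[(F - y)_+^p] + (y - f)_+ and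
   c <= 1, this yields h(x) <= phi(x,y,z) + (f(x) - y)_+ = max_{lam in [0,1]}
   L(x,y,z,lam) for all y and z > 0. Conversely, at y = f(x) some z >= eps is
   within c kappa eps of the minimum, so phi(x,f(x),z) <= h(x) + c kappa eps.
   Comparing the saddle point with (xs, f(xs), z) and using
   kappa < p^(-1/(p-1)) gives the three bounds. *)

(* The coefficient of [c * z] in [phi]. *)
Definition kappa {R : realType} (p : R) : R := (p - 1) * p `^ (- (p / (p - 1))).

Section variational_root.
Context {R : realType} {p : R}.
Hypothesis p1 : 1 < p.
Let p0 : 0 < p. Proof. exact: lt_trans p1. Qed.
Let p1_neq0 : p - 1 != 0. Proof. by rewrite subr_eq0 gt_eqF. Qed.

Lemma kappaE : kappa p = (p - 1) / p * p `^ (- (p - 1)^-1).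
Proof.
rewrite /kappa.
have -> : - (p / (p - 1)) = - (p - 1)^-1 + (-1) by field.
rewrite powRD; last by rewrite (gt_eqF p0) implybT.
by rewrite powR_inv1 ?(ltW p0)// mulrCA mulrC.
Qed.

Lemma kappa_lt : kappa p < p `^ (- (p - 1)^-1).
Proof.
rewrite kappaE gtr_pMl ?powR_gt0// ltr_pdivrMr// mul1r.
by rewrite ltrBlDr ltrDl.
Qed.

Lemma le_powR_add_kappa t : 0 <= t -> t <= t `^ p + kappa p.
Proof.
(* Young's inequality with exponents p and p/(p-1) for t p^(1/p) and p^(-1/p). *)
move=> t0; pose q := p / (p - 1); pose X := p `^ p^-1.
have q0 : 0 < q by rewrite divr_gt0 ?subr_gt0.
have X0 : 0 < X by rewrite powR_gt0.
have Xinv0 : 0 <= X^-1 by rewrite invr_ge0 ltW.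
have pq : p^-1 + q^-1 = 1 by rewrite /q invf_div; field; rewrite gt_eqF.
have := conjugate_powR (mulr_ge0 t0 (ltW X0)) Xinv0 p0 q0 pq.
rewrite mulfK ?gt_eqF// => /le_trans; apply.
rewrite powRM ?(ltW X0)// -powRrM mulVf ?gt_eqF// powRr1 ?(ltW p0)//.
rewrite mulfK ?gt_eqF// lerD2l -powRN -powRrM kappaE /q.
by rewrite mulNr mulrA mulVf ?gt_eqF// mul1r invf_div mulrC.
Qed.

Lemma root_le_variational G z : 0 <= G -> 0 < z ->
  G `^ p^-1 <= G / z `^ (p - 1) + kappa p * z.
Proof.
move=> G0 z0; set u := G `^ p^-1.
have u0 : 0 <= u by rewrite powR_ge0.
have Gu : G = u `^ p by rewrite /u -powRrM mulVf ?gt_eqF// powRr1.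
have := le_powR_add_kappa _ (divr_ge0 u0 (ltW z0)).
move/(ler_wpM2r (ltW z0)); rewrite divfK ?gt_eqF// => /le_trans; apply.
rewrite mulrDl lerD2r Gu ler_pdivlMr ?powR_gt0// -mulrA.
by rewrite mulr_powRB1 ?(ltW z0)// -powRM ?divfK ?gt_eqF ?(ltW z0)// divr_ge0 ?(ltW z0).
Qed.

Lemma variational_root_attained G : 0 < G ->
  let z := G `^ p^-1 * p `^ (p - 1)^-1 in
  G / z `^ (p - 1) + kappa p * z = G `^ p^-1.
Proof.
move=> G0 /=; set u := G `^ p^-1; set r := p `^ (p - 1)^-1.
have u0 : 0 < u by rewrite powR_gt0.
have Gu : G = u * u `^ (p - 1).
  by rewrite mulr_powRB1 ?(ltW u0)// /u -powRrM mulVf ?gt_eqF// powRr1 ?ltW.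
have rp : r `^ (p - 1) = p by rewrite /r -powRrM mulVf// powRr1 ?(ltW p0).
have kr : kappa p * r = (p - 1) / p.
  by rewrite kappaE /r powRN -mulrA mulVf ?mulr1// gt_eqF ?powR_gt0.
rewrite powRM ?ltW ?powR_gt0// rp mulrCA kr {1}Gu.
by field; rewrite !gt_eqF ?powR_gt0.
Qed.

Lemma variational_root_near G e : 0 <= G -> 0 < e ->
  exists2 z, e <= z & G / z `^ (p - 1) + kappa p * z <= G `^ p^-1 + kappa p * e.
Proof.
move=> G0 e0; have [->|GN0] := eqVneq G 0.
  by exists e => //; rewrite mul0r powR0 ?add0r// invr_eq0 (gt_eqF p0).
have {GN0 G0}G0 : 0 < G by rewrite lt_neqAle eq_sym GN0.
have := variational_root_attained _ G0.
set z := G `^ p^-1 * _ => attained.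
have z0 : 0 < z by rewrite mulr_gt0 ?powR_gt0.
exists (z + e); first by rewrite lerDr ltW.
rewrite -attained mulrDr addrA !lerD2r ler_pM2l// lef_pV2 ?posrE ?powR_gt0 ?addr_gt0//.
by rewrite ge0_ler_powR ?nnegrE ?subr_ge0 ?addr_ge0 ?lerDl ?ltW.
Qed.

End variational_root.

Section Lnorm_EFin.
Context {d} {T : measurableType d} {R : realType} {p : R}.
Hypothesis p0 : 0 < p.

Lemma Lnorm_EFinE (mu : {measure set T -> \bar R}) (f : T -> R) :
  ('N[mu]_p%:E[EFin \o f] = (\int[mu]_x (`|f x| `^ p)%:E) `^ p^-1)%E.
Proof.
by rewrite unlock; congr (_ `^ _)%E; apply: eq_integral => x _; rewrite /= poweR_EFin.
Qed.

Lemma le_Lnorm_EFin (mu : {measure set T -> \bar R}) (f g : T -> R) :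
  measurable_fun setT f -> measurable_fun setT g ->
  (forall x, `|f x| <= `|g x|) ->
  ('N[mu]_p%:E[EFin \o f] <= 'N[mu]_p%:E[EFin \o g])%E.
Proof.
move=> mf mg fg; rewrite !Lnorm_EFinE.
have ipow (h : T -> R) : (0 <= \int[mu]_x (`|h x| `^ p)%:E)%E.
  by apply: integral_ge0 => x _; rewrite lee_fin powR_ge0.
apply: gt0_ler_poweR; rewrite ?in_itv/= ?leey ?ipow//; first by rewrite invr_ge0 ltW.
apply: ge0_le_integral => //.
- exact/measurable_EFinP/(measurableT_comp (measurable_powR p))/measurableT_comp.
- exact/measurable_EFinP/(measurableT_comp (measurable_powR p))/measurableT_comp.
by move=> x _; rewrite lee_fin ge0_ler_powR ?nnegrE // ltW.
Qed.

Lemma Lnorm_EFin_cst (P : probability T R) k : ('N[P]_p%:E[EFin \o cst k] = `|k|%:E)%E.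
Proof.
rewrite Lnorm_EFinE (integral_cst P measurableT (`|k| `^ p)%:E).
set m := (X in (_ * X)%E); rewrite (_ : m = 1%E); last exact: probability_setT.
rewrite mule1 poweR_EFin.
by rewrite -powRrM mulfV ?gt_eqF// powRr1.
Qed.

End Lnorm_EFin.

Lemma pospart_ge0 {R : realType} (a : R) : 0 <= pospart a.
Proof. by rewrite /pospart le_max lexx orbT. Qed.

Lemma addr_pospartB {R : realType} (a b : R) : a + pospart (b - a) = b + pospart (a - b).
Proof.
rewrite /pospart; have [ab|/ltW ba] := leP a b.
  by rewrite (max_idPl _) ?subr_ge0// (max_idPr _) ?subr_le0//; lra.
by rewrite (max_idPr _) ?subr_le0// (max_idPl _) ?subr_ge0//; lra.
Qed.

Lemma pospartD_le {R : realType} (a b : R) : pospart (a + b) <= pospart a + pospart b.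
Proof.
rewrite {1}/pospart ge_max addr_ge0 ?pospart_ge0// andbT.
by rewrite lerD // le_max lexx.
Qed.

Lemma powR_add_le {R : realType} (p a b : R) : 0 <= p -> 0 <= a -> 0 <= b ->
  (a + b) `^ p <= 2 `^ p * (a `^ p + b `^ p).
Proof.
move=> p0 a0 b0; wlog ab : a b a0 b0 / a <= b.
  move=> H; have [|/ltW ba] := leP a b; first exact: H.
  by rewrite addrC [a `^ p + _]addrC; exact: H.
apply: (@le_trans _ _ ((2 * b) `^ p)).
  by rewrite ge0_ler_powR ?nnegrE ?addr_ge0 ?mulr_ge0// mulr2n mulrDl mul1r lerD2r.
by rewrite powRM// ler_pM2l ?powR_gt0// lerDr powR_ge0.
Qed.

Definition excess_moment {R : realType} {d} {T : measurableType d}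
  (P : probability T R) (p : R) (g : T -> R) (y : R) : R :=
  Ex P (fun w => pospart (g w - y) `^ p).

Section excess_moment.
Context {R : realType} {d} {T : measurableType d} {P : probability T R} {p : R} {g : T -> R}.
Hypothesis p1 : 1 < p.
Hypothesis mg : measurable_fun setT g.
Hypothesis ig : P.-integrable setT (fun w => (`|g w| `^ p)%:E).
Let p0 : 0 < p. Proof. exact: lt_trans p1. Qed.

Lemma measurable_pospart_sub y : measurable_fun setT (fun w => pospart (g w - y)).
Proof.
apply: (measurable_maxr (f := fun w => g w - y) (g := cst 0)).
  exact/measurable_funB/measurable_cst.
exact: measurable_cst.
Qed.

Lemma integrable_pospart_sub_powR y :
  P.-integrable setT (fun w => (pospart (g w - y) `^ p)%:E).
Proof.
have iy : P.-integrable setT (fun w => (`|g w| `^ p)%:E + (`|y| `^ p)%:E)%E.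
  exact/(integrableD measurableT ig)/finite_measure_integrable_cst.
apply: le_integrable (integrableZl measurableT (2 `^ p) iy) => // [|w _].
  exact/measurable_EFinP/(measurableT_comp (measurable_powR p))/measurable_pospart_sub.
rewrite -EFinD -EFinM !abse_EFin lee_fin ger0_norm ?powR_ge0//.
rewrite ger0_norm ?mulr_ge0 ?addr_ge0 ?powR_ge0//.
apply: le_trans (powR_add_le _ _ _ (ltW p0) (normr_ge0 _) (normr_ge0 _)).
rewrite ge0_ler_powR ?nnegrE ?pospart_ge0 ?addr_ge0 ?(ltW p0)//.
rewrite /pospart ge_max addr_ge0// andbT.
by rewrite (le_trans (ler_norm _))// (le_trans (ler_normD _ _))// normrN.
Qed.

Lemma excess_momentE y :
  (excess_moment P p g y)%:E = (\int[P]_w (pospart (g w - y) `^ p)%:E)%E.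
Proof.
by rewrite fineK// (integrable_fin_num measurableT (integrable_pospart_sub_powR y)).
Qed.

Lemma excess_moment_ge0 y : 0 <= excess_moment P p g y.
Proof.
by rewrite -lee_fin excess_momentE integral_ge0// => w _; rewrite lee_fin powR_ge0.
Qed.

Lemma Lnorm_pospart_sub y :
  'N[P]_p%:E[EFin \o (fun w => pospart (g w - y))]%E =
    (excess_moment P p g y `^ p^-1)%:E.
Proof.
rewrite Lnorm_EFinE -poweR_EFin excess_momentE.
by under eq_integral => w _ do rewrite (ger0_norm (pospart_ge0 _)).
Qed.

Lemma excess_moment_root_le y1 y2 :
  excess_moment P p g y1 `^ p^-1 <= excess_moment P p g y2 `^ p^-1 + pospart (y2 - y1).
Proof.
set k := pospart (y2 - y1).
have shift : (forall w, `|pospart (g w - y1)| <= `|pospart (g w - y2) + k|).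
  move=> w; rewrite !ger0_norm ?addr_ge0 ?pospart_ge0//.
  by rewrite -[g w - y1](subrKA y2) pospartD_le.
have := le_Lnorm_EFin p0 P _ _ (measurable_pospart_sub y1)
  (measurable_funD (measurable_pospart_sub y2) (measurable_cst k)) shift.
move=> /le_trans/(_ (minkowski_EFin P (measurable_pospart_sub y2) (measurable_cst k) (ltW p1))).
by rewrite !Lnorm_pospart_sub Lnorm_EFin_cst// ger0_norm ?pospart_ge0.
Qed.

Context {c : R}.
Hypotheses (c0 : 0 < c) (c1 : c <= 1).

Lemma root_excess_moment_le_variational f y z : 0 < z ->
  f + c * excess_moment P p g f `^ p^-1 <=
  c / z `^ (p - 1) * excess_moment P p g y + y + c * kappa p * z + pospart (f - y).
Proof.
move=> z0; have := ler_wpM2l (ltW c0) (le_trans (excess_moment_root_le f y)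
  (lerD (root_le_variational p1 _ _ (excess_moment_ge0 y) z0) (lexx (pospart (y - f))))).
have := ler_piMl (pospart_ge0 (y - f)) c1.
have := addr_pospartB f y.
move: (excess_moment P p g f `^ p^-1) (excess_moment P p g y) (z `^ (p - 1)).
move: (pospart (y - f)) (pospart (f - y)) (kappa p) => a b K A G Z.
lra.
Qed.

Lemma excess_moment_variational_near f e : 0 < e ->
  exists2 z, e <= z & c / z `^ (p - 1) * excess_moment P p g f + f + c * kappa p * z
                      <= f + c * excess_moment P p g f `^ p^-1 + c * kappa p * e.
Proof.
move=> e0; have [z ez near] := variational_root_near p1 _ _ (excess_moment_ge0 f) e0.
exists z => //; move: (ler_wpM2l (ltW c0) near).
move: (excess_moment P p g f `^ p^-1) (excess_moment P p g f) (z `^ (p - 1)) (kappa p).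
move=> A G Z K; lra.
Qed.
End excess_moment.

Lemma pospart_Lam {R : realType} (a : R) : exists2 lam, Lam lam & pospart a = lam * a.
Proof.
rewrite /Lam /pospart; have [a0|/ltW a0] := leP a 0.
  by exists 0; rewrite /= ?in_itv/= ?lexx ?ler01 ?mul0r ?(max_idPr a0).
by exists 1; rewrite /= ?in_itv/= ?lexx ?ler01 ?mul1r ?(max_idPl a0).
Qed.

Section objectives.
Context {R : realType} {d} {T : measurableType d} {P : probability T R}
  {d'} {Xi : measurableType d'} {xi : T -> Xi} {n : nat} {F : 'rV[R]_n -> Xi -> R} {p c : R}.
Hypotheses (p1 : 1 < p) (c0 : 0 < c) (c1 : c <= 1).
Hypothesis mF : forall x, measurable_fun setT (fun w => F x (xi w)).
Hypothesis iF : forall x, P.-integrable setT (fun w => (`|F x (xi w)| `^ p)%:E).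

Local Notation f := (fobj P xi F).
Local Notation h := (hobj P xi F p c).
Local Notation phi := (phi P xi F p c).
Local Notation L := (Lag P xi F p c).

Lemma phiE x y z : phi x y z =
  c / z `^ (p - 1) * excess_moment P p (fun w => F x (xi w)) y + y + c * kappa p * z.
Proof. by rewrite /phi /kappa mulrA. Qed.

Lemma hobj_le_phi_pospart x y z : 0 < z -> h x <= phi x y z + pospart (f x - y).
Proof. by rewrite phiE; apply: root_excess_moment_le_variational. Qed.

Lemma hobj_le_Lag x y z : 0 < z -> exists2 lam, Lam lam & h x <= L x y z lam.
Proof.
move=> z0; have [lam Llam fy] := pospart_Lam (f x - y).
by exists lam; rewrite // /Lag -fy hobj_le_phi_pospart.
Qed.

Lemma phi_near_hobj x e : 0 < e ->
  exists2 z, e <= z & phi x (f x) z <= h x + c * kappa p * e.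
Proof.
move=> e0; have [z ez near] := excess_moment_variational_near p1 (mF x) (iF x) c0 (f x) _ e0.
by exists z; rewrite ?phiE.
Qed.

Lemma Lag_fobj x z lam : L x (f x) z lam = phi x (f x) z.
Proof. by rewrite /Lag subrr mulr0 addr0. Qed.

Lemma hobj_le_ereal_sup_Lag x y z : 0 < z ->
  ((h x)%:E <= ereal_sup [set (L x y z lam)%:E | lam in @Lam R])%E.
Proof.
move=> z0; have [lam Llam hle] := hobj_le_Lag x y _ z0.
apply: (@le_trans _ _ (L x y z lam)%:E); first by rewrite lee_fin.
by apply: ereal_sup_ubound; exists lam.
Qed.

Lemma ereal_inf_Lag_le (X : set 'rV[R]_n) (eps : R) x (lam : R) : X x -> 0 < eps ->
  (ereal_inf [set r : \bar R | exists x' (y z : R),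
                [/\ X x', (eps <= z)%R & r = (L x' y z lam)%:E]]
     <= (h x + c * kappa p * eps)%:E)%E.
Proof.
move=> Xx e0; have [z ez near] := phi_near_hobj x _ e0.
apply: (@le_trans _ _ (L x (f x) z lam)%:E); last by rewrite lee_fin Lag_fobj.
by apply: ereal_inf_lbound; exists x, (f x), z.
Qed.

End objectives.

Theorem lemma14 (R : realType) (d : measure_display) (T : measurableType d)
  (P : probability T R) (d' : measure_display) (Xi : measurableType d')
  (xi : T -> Xi) (n : nat) (F : 'rV[R]_n -> Xi -> R) (p c : R)
  (X : set 'rV[R]_n) (eps : R)
  (xs : 'rV[R]_n) (xe : 'rV[R]_n) (ye ze le : R) :
  1 < p -> 0 < c -> c <= 1 ->
  X !=set0 -> convex_setR X -> compact X ->
  (forall s : Xi, continuous (fun x => F x s)) ->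
  (forall s : Xi, convex_funR (fun x => F x s)) ->
  (forall x, measurable_fun setT (fun w => F x (xi w))) ->
  (forall x, P.-integrable setT (fun w => ((`|F x (xi w)|) `^ p)%:E)) ->
  (* x* minimizes h over X *)
  X xs -> (forall x, X x -> hobj P xi F p c xs <= hobj P xi F p c x) ->
  0 < eps ->
  (* (xe,ye,ze,le) is a saddle point of min_{x in X, y, z >= eps} max_{lam in Lam} L *)
  X xe -> eps <= ze -> @Lam R le ->
  (forall lam, @Lam R lam ->
     Lag P xi F p c xe ye ze lam <= Lag P xi F p c xe ye ze le) ->
  (forall (x : 'rV[R]_n) (y z : R), X x -> eps <= z ->
     Lag P xi F p c xe ye ze le <= Lag P xi F p c x y z le) ->
  let delta := c * p `^ (- (p - 1)^-1) * eps in
  [/\ hobj P xi F p c xe - hobj P xi F p c xs <= delta,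
      (forall (xb : 'rV[R]_n) (yb zb : R), X xb -> eps <= zb -> fobj P xi F xb - yb <= 0 ->
         hobj P xi F p c xb - hobj P xi F p c xs <
           (phi P xi F p c xb yb zb - phi P xi F p c xe ye ze) + delta) &
      (forall (xb : 'rV[R]_n) (yb zb lb : R), X xb -> eps <= zb -> @Lam R lb ->
         (((hobj P xi F p c xb - hobj P xi F p c xs)%:E <
           (ereal_sup [set (Lag P xi F p c xb yb zb lam)%:E | lam in @Lam R]
            - ereal_inf [set r : \bar R | exists (x : 'rV[R]_n) (y z : R), [/\ X x, (eps <= z)%R &
                              r = (Lag P xi F p c x y z lb)%:E]]
            + delta%:E))%E))].
Proof.
(* Convexity, compactness and continuity only serve the existence of the saddle
   point, and x* need not be optimal: any point of X will do. *)
move=> p1 c0 c1 _ _ _ _ _ mF iF Xs _ e0 Xe eze _ Lmax Lmin delta.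
set K := c * kappa p * eps.
have Kdelta : K < delta by rewrite ltr_pM2r// ltr_pM2l// kappa_lt.
have gap a b : a - b < a - (b + K) + delta by lra.
have pos z : eps <= z -> 0 < z by exact: lt_le_trans.
have saddle_le : Lag P xi F p c xe ye ze le <= hobj P xi F p c xs + K.
  have [z0 ez0 near] := phi_near_hobj p1 c0 mF iF xs _ e0.
  by apply: le_trans (Lmin _ (fobj P xi F xs) _ Xs ez0) _; rewrite Lag_fobj.
split.
- have [lam Llam] := hobj_le_Lag p1 c0 c1 mF iF xe ye _ (pos _ eze).
  move/le_trans/(_ (le_trans (Lmax _ Llam) saddle_le)) => hK.
  by rewrite lerBlDl (le_trans hK)// lerD2l ltW.
- move=> xb yb zb Xb ezb fy.
  have := hobj_le_phi_pospart p1 c0 c1 mF iF xb yb _ (pos _ ezb).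
  rewrite /pospart (max_idPr fy) addr0.
  have Lam0 : @Lam R 0 by rewrite /Lam /= in_itv/= lexx ler01.
  have := le_trans (Lmax 0 Lam0) saddle_le; rewrite /Lag mul0r addr0.
  move: (hobj P xi F p c xb) (hobj P xi F p c xs).
  move: (phi P xi F p c xb yb zb) (phi P xi F p c xe ye ze) => a b hb hs.
  lra.
- move=> xb yb zb lb Xb ezb _.
  apply: (@lt_le_trans _ _
    ((hobj P xi F p c xb)%:E - (hobj P xi F p c xs + K)%:E + delta%:E)%E).
    by rewrite -EFinB -EFinD lte_fin gap.
  rewrite leeD2r// leeB// ?(ereal_inf_Lag_le p1 c0 mF iF)//.
  exact: (hobj_le_ereal_sup_Lag p1 c0 c1 mF iF _ _ _ (pos _ ezb)).
Qed.
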